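(* Let $G$ be a group with identity $e$, $A$ a set with at least two elements, and $\tau: A^G\to A^G$ a lazy cellular automaton with minimal neighborhood $S \subseteq G$, unique active transition $p \in A^S$ and writing symbol $a \in A \setminus \{p(e)\}$. For $b \in A$ let $S_b := p^{-1}\{b\} = \{s\in S : p(s) = b\}$. Then $\mathrm{ord}(\tau)$ is at most the minimum $n\geq 2$ (if one exists) such that for every word $(s_1, \ldots, s_{n-1})\in (S_a)^{n-1}$ there exist $1 \leq i \leq j \leq n-1$ satisfying at least one of the following: \begin{enumerate} \item $(s_j\cdots s_i)^{-1}\in S_b^{-1}S_a$ for some $b\in A\setminus\{a\}$; \item $(s_j\cdots s_i)^{-1}\in S_{b_1}^{-1}S_{b_2}$ for some $b_1, b_2\in A\setminus\{a\}$ with $b_1\neq b_2$. \end{enumerate}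
   Context: $A^G$ is the set of maps $G \to A$ with shift action $(g\cdot x)(h) := x(hg)$. A cellular automaton is a map $\tau : A^G \to A^G$ with a finite $S \subseteq G$ (a neighborhood) and $\mu : A^S \to A$ such that $\tau(x)(g) = \mu((g\cdot x)|_S)$; the minimal neighborhood is the unique neighborhood of smallest cardinality. $\tau$ is lazy with unique active transition $p \in A^S$ if there is a local defining map $\mu : A^S \to A$ with $e \in S$ such that for all $z \in A^S$: $\mu(z) = z(e)$ iff $z \neq p$; its writing symbol is $a:=\mu(p)$. $\tau^k$ is the $k$-fold composition, $\tau^0$ the identity; $\mathrm{ord}(\tau) := |\{\tau^k : k \in \mathbb{N}\}|$, $\mathbb{N}=\{0,1,\dots\}$. For $S, K \subseteq G$, $SK := \{sk : s\in S, k \in K\}$ and $S^{-1} := \{s^{-1} : s\in S\}$. *)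

From HB Require Import structures.
From mathcomp Require Import all_boot finmap.

Unset Strict Implicit.
Unset Printing Implicit Defensive.

Local Open Scope group_scope.
Local Open Scope fset_scope.

Section CA.
Variables (G : groupType) (A : Type).

Definition shift (g : G) (x : G -> A) : G -> A := fun h => x (h * g).

Definition restrict (S : {fset G}) (x : G -> A) : S -> A := fun s => x (val s).

Definition local_rule (tau : (G -> A) -> (G -> A)) (S : {fset G})
    (mu : (S -> A) -> A) : Prop :=
  forall (x : G -> A) (g : G), tau x g = mu (restrict S (shift g x)).

Definition is_neighborhood (tau : (G -> A) -> (G -> A)) (S : {fset G}) : Prop :=
  exists mu : (S -> A) -> A, local_rule tau S mu.

Definition is_cellular_automaton (tau : (G -> A) -> (G -> A)) : Prop :=
  exists S : {fset G}, is_neighborhood tau S.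

Definition is_minimal_neighborhood (tau : (G -> A) -> (G -> A)) (S : {fset G}) : Prop :=
  is_neighborhood tau S /\
  forall S' : {fset G}, is_neighborhood tau S' -> #|` S| <= #|` S'|.

Definition lazy_with (tau : (G -> A) -> (G -> A)) (S : {fset G}) (p : S -> A)
    (a : A) : Prop :=
  exists mu : (S -> A) -> A, local_rule tau S mu /\
  exists he : (1 : G) \in S,
    (forall z : S -> A, mu z = z [` he] <-> z <> p) /\ mu p = a.

(* ord(tau) <= n : the set {tau^k : k in N} has at most n elements *)
Definition ord_le (tau : (G -> A) -> (G -> A)) (n : nat) : Prop :=
  exists ts : seq ((G -> A) -> (G -> A)),
    size ts <= n /\
    forall k : nat, exists2 i : nat, i < size ts & iter k tau = nth tau ts i.

Definition in_Sb (S : {fset G}) (p : S -> A) (b : A) (g : G) : Prop :=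
  exists hg : g \in S, p [` hg] = b.

(* for a word w = (s_1,...,s_m) and 0-based i <= j, the product s_j ... s_i *)
Definition word_prod (w : seq G) (i j : nat) : G :=
  \prod_(s <- rev (drop i (take j.+1 w))) s.

Definition word_condition (S : {fset G}) (p : S -> A) (a : A) (n : nat) : Prop :=
  forall w : seq G, size w = n.-1 -> (forall s, s \in w -> in_Sb S p a s) ->
  exists i j : nat, i <= j /\ j < n.-1 /\
   ( (exists b : A, b <> a /\
        exists t u : G, in_Sb S p b t /\ in_Sb S p a u /\
          (word_prod w i j)^-1 = t^-1 * u)
   \/ (exists b1 b2 : A, b1 <> a /\ b2 <> a /\ b1 <> b2 /\
        exists t u : G, in_Sb S p b1 t /\ in_Sb S p b2 u /\
          (word_prod w i j)^-1 = t^-1 * u) ).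

End CA.

Arguments shift {G A}.
Arguments restrict {G A}.
Arguments local_rule {G A}.
Arguments is_neighborhood {G A}.
Arguments is_cellular_automaton {G A}.
Arguments is_minimal_neighborhood {G A}.
Arguments lazy_with {G A}.
Arguments ord_le {G A}.
Arguments in_Sb {G A}.
Arguments word_prod {G}.
Arguments word_condition {G A}.

From HB Require Import structures.
From mathcomp Require Import all_boot finmap.
From Stdlib Require Import Classical FunctionalExtensionality.
From mathcomp Require Import zify.

Local Open Scope group_scope.
Local Open Scope fset_scope.

(* A lazy automaton only ever writes [a], so a cell holding [a] keeps it.
   If the active transition fires at [g] in tau^m(x), it did not fire there in
   tau^(m-1)(x) (tau would have written [a], not p(e)); hence some neighbour
   [s g] just changed, which forces p(s) = a and the transition to fire at
   [s g] one step earlier.  Iterating gives a word s_1 ... s_m over S_a along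
   which the transition fired at every earlier time.  The word condition then
   exhibits one cell read through p at two times: it holds p(u) first and p(t)
   later, with p(t) different from both [a] and p(u), which is impossible.  So
   for m = n - 1 nothing is active in tau^m(x), and tau^n = tau^(n-1). *)

Section LazyAutomaton.

Set Implicit Arguments.

Variables (G : groupType) (A : Type) (tau : (G -> A) -> G -> A).
Variables (S : {fset G}) (p : S -> A) (a : A) (mu : (S -> A) -> A).
Hypotheses (tau_local : local_rule tau S mu) (e_in_S : (1 : G) \in S).
Hypotheses (mu_lazy : forall z : S -> A, mu z = z [` e_in_S] <-> z <> p).
Hypotheses (mu_p : mu p = a) (a_neq_pe : a <> p [` e_in_S]).

Definition active (y : G -> A) (g : G) : Prop := restrict S (shift g y) = p.

Lemma tau_active y g : active y g -> tau y g = a.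
Proof. by rewrite tau_local => ->. Qed.

Lemma tau_inactive y g : ~ active y g -> tau y g = y g.
Proof.
move=> /(proj2 (mu_lazy _)); rewrite tau_local => ->.
by rewrite /restrict /shift /= mul1g.
Qed.

Lemma active_eval y g (s : S) : active y g -> y (val s * g) = p s.
Proof. by move <-. Qed.

Lemma iter_tau_cases x k l c :
  k <= l -> iter l tau x c = iter k tau x c \/ iter l tau x c = a.
Proof.
move/subnK <-; elim: (l - k) => [|d IH]; first by left.
rewrite addSn /=; have [act_c | inact_c] := classic (active (iter (d + k) tau x) c).
  by right; rewrite tau_active.
by rewrite tau_inactive.
Qed.

Lemma active_tau y g :
  active (tau y) g -> exists2 s, in_Sb S p a s & active y (s * g).
Proof.
move=> act_g.
have inact_g : ~ active y g.
  move=> /tau_active tau_g; apply: a_neq_pe.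
  by rewrite -tau_g -(active_eval [` e_in_S] act_g) /= mul1g.
have [s ys_neq] : exists s : S, y (val s * g) <> p s.
  apply: NNPP => all_eq; apply: inact_g; apply: functional_extensionality => s.
  by apply: NNPP => neq; apply: all_eq; exists s.
have tau_sg := active_eval s act_g.
have act_sg : active y (val s * g).
  by apply: NNPP => /tau_inactive; rewrite tau_sg => /esym.
exists (val s) => //; exists (valP s).
by rewrite fsetsubE -tau_sg tau_active.
Qed.

Definition prefix_prod (w : seq G) (i : nat) : G := \prod_(r <- rev (take i w)) r.

Lemma prefix_prod0 w : prefix_prod w 0 = 1.
Proof. by rewrite /prefix_prod take0 big_nil. Qed.

Lemma prefix_prod_cons s w i : prefix_prod (s :: w) i.+1 = prefix_prod w i * s.
Proof. by rewrite /prefix_prod /= rev_cons big_rcons. Qed.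

Lemma prefix_prod_split w i j :
  i <= j.+1 -> prefix_prod w j.+1 = word_prod w i j * prefix_prod w i.
Proof.
move=> le_ij; rewrite /prefix_prod /word_prod.
by rewrite -{1}(cat_take_drop i (take j.+1 w)) take_takel // rev_cat big_cat.
Qed.

Lemma active_chain x m g : active (iter m tau x) g ->
  exists w : seq G, [/\ size w = m, forall s, s \in w -> in_Sb S p a s &
    forall i, i <= m -> active (iter (m - i) tau x) (prefix_prod w i * g)].
Proof.
elim: m g => [|m IH] g act_g.
  by exists [::]; split=> // -[|] // _; rewrite prefix_prod0 mul1g.
have [s s_Sa /IH [w [size_w w_Sa act_w]]] := active_tau act_g.
exists (s :: w); split=> [|r|[|i]]; first by rewrite /= size_w.
- by rewrite in_cons => /predU1P [-> //|]; apply: w_Sa.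
- by rewrite prefix_prod0 mul1g.
- by rewrite subSS prefix_prod_cons -mulgA; apply: act_w.
Qed.

Lemma active_chain_pattern {x m g w i j t u} (ht : t \in S) (hu : u \in S) :
  (forall k, k <= m -> active (iter (m - k) tau x) (prefix_prod w k * g)) ->
  i <= j -> j < m -> (word_prod w i j)^-1 = t^-1 * u ->
  p [` ht] = p [` hu] \/ p [` ht] = a.
Proof.
move=> act_w le_ij lt_jm word_eq.
set c := t * (prefix_prod w i * g).
have c_eq : u * (prefix_prod w j.+1 * g) = c.
  rewrite (@prefix_prod_split w i j (leqW le_ij)) -[word_prod _ _ _]invgK word_eq.
  by rewrite invgM invgK -!mulgA mulVKg.
have <- : iter (m - i) tau x c = p [` ht].
  exact: (active_eval [` ht] (act_w i (leq_trans le_ij (ltnW lt_jm)))).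
have <- : iter (m - j.+1) tau x c = p [` hu].
  by rewrite -c_eq; exact: (active_eval [` hu] (act_w j.+1 lt_jm)).
by apply: iter_tau_cases; lia.
Qed.

Lemma iter_tau_inactive m x g :
  word_condition S p a m.+1 -> ~ active (iter m tau x) g.
Proof.
move=> word_cond /active_chain [w [size_w w_Sa act_w]].
have [i [j [le_ij [lt_jm [[b [b_neq_a [t [u [[ht pt] [[hu pu] eq_tu]]]]]]|
  [b1 [b2 [b1_neq_a [_ [b1_neq_b2 [t [u [[ht pt] [[hu pu] eq_tu]]]]]]]]]]]]]] :=
  word_cond w size_w w_Sa;
  by have [] := active_chain_pattern ht hu act_w le_ij lt_jm eq_tu; rewrite pt ?pu.
Qed.

Lemma iter_tau_stable m : word_condition S p a m.+1 -> iter m.+1 tau = iter m tau.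
Proof.
move=> word_cond; apply: functional_extensionality => x.
apply: functional_extensionality => g.
exact/tau_inactive/iter_tau_inactive.
Qed.

End LazyAutomaton.

Lemma ord_le_iter_stable (G : groupType) (A : Type) (f : (G -> A) -> G -> A) m :
  iter m.+1 f = iter m f -> ord_le f m.+1.
Proof.
move=> f_stable.
have iter_ge k : m <= k -> iter k f = iter m f.
  move=> /subnK <-; apply: functional_extensionality => x.
  by rewrite iterD iter_fix // -iterS f_stable.
exists (mkseq (fun i => iter i f) m.+1); split; first by rewrite size_mkseq.
move=> k; rewrite size_mkseq; have [lt_km | le_mk] := ltnP k m.+1.
  by exists k; rewrite ?nth_mkseq.
by exists m; rewrite ?nth_mkseq ?iter_ge // ltnW.
Qed.

Theorem theorem2 (G : groupType) (A : Type)
  (two_elems : exists x y : A, x <> y)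
  (tau : (G -> A) -> (G -> A)) (S : {fset G}) (p : S -> A) (a : A)
  (hCA : is_cellular_automaton tau)
  (hmin : is_minimal_neighborhood tau S)
  (hlazy : lazy_with tau S p a)
  (ha : forall he : (1 : G) \in S, a <> p [` he]) :
  forall n : nat, 2 <= n -> word_condition S p a n -> ord_le tau n.
Proof.
case=> [//|m] _ word_cond.
have [mu [tau_local [e_in_S [mu_lazy mu_p]]]] := hlazy.
apply/ord_le_iter_stable/(iter_tau_stable tau_local mu_lazy mu_p (ha e_in_S)).
exact: word_cond.
Qed.
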